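(* In the setting of the context, write $A_1=\mathrm{SYM}$, $A_2=\mathrm{SR}$, $A_3=\mathrm{SUPP}$, $A_4=\mathrm{LF}$, $A_5=\mathrm{M}$, and $U_1=U_3=U_4=\Lambda_1=\Lambda_3=\Lambda_4=\mathbb{C}^N$. Suppose: (a) $U_2$ is a neighborhood of a point $x_2\in A_2$ such that $P_{A_2}$ is pointwise $\alpha$-firmly nonexpansive with $\alpha=1/2$ on $U_2$ at each point of $\Lambda_2:=P_{A_2}^{-1}(A_2\cap U_2)\cap U_2$; and $U_5$ is a neighborhood of a point $x_5\in A_5$ such that $A_5$ is $\epsilon$-super-regular at a distance at $x_5$ relative to $\Lambda_5:=P_{A_5}^{-1}(A_5\cap U_5)\cap U_5$ with constant $\epsilon_{U_5}$ on $U_5$. Then: (i) if moreover $\epsilon_{U_5}\in[0,4\sqrt2/7-5/7)$, then for $j=1,\dots,5$ the reflector $R_{A_j}$ is pointwise almost nonexpansive with violation $\tilde\epsilon_j$ at each point of $\Lambda_j$ on $U_j$, where $\tilde\epsilon_1=\tilde\epsilon_2=\tilde\epsilon_3=\tilde\epsilon_4=0$ and $\tilde\epsilon_5=8\epsilon_{U_5}(1+\epsilon_{U_5})/(1-\epsilon_{U_5})^2$; (ii) if moreover $\epsilon_{U_5}\in[0,2\sqrt3/3-1)$, then for $j=1,\dots,5$ the projector $P_{A_j}$ is pointwise almost $\alpha$-firmly nonexpansive with constant $\alpha_j=1/2$ and violation $\check\epsilon_j$ at each point of $\Lambda_j$ on $U_j$, where $\check\epsilon_1=\check\epsilon_2=\check\epsilon_3=\check\epsilon_4=0$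 and $\check\epsilon_5=4\epsilon_{U_5}(1+\epsilon_{U_5})/(1-\epsilon_{U_5})^2$.
   Context: Let $N=N_xN_yN_z$; vectors $u\in\mathbb{C}^N$ are arrays indexed by $\mathbb I=\{1,\dots,N_x\}\times\{1,\dots,N_y\}\times\{1,\dots,N_z\}$; $\mathbb{C}^N\cong\mathbb{R}^{2N}$ carries the real inner product $\langle x,y\rangle=\mathrm{Re}\sum_k\overline{x_k}y_k$ and Euclidean norm. Let $\mathcal F:\mathbb{C}^N\to\mathbb{C}^{\widehat N}$ be the discrete Fourier transform, $\widehat u=\mathcal Fu$, entries indexed by $\widehat{\mathbb I}$ with grid points $(\hat x_i,\hat y_j,\hat z_l)\in\mathbb{R}^3$. Given: $\mathbb S\subset\widehat{\mathbb I}$, data $b_{(i,j,l)}\ge0$ for $(i,j,l)\in\mathbb S$, a ball $B_{\bar r}\subset\mathbb{R}^3$, a symmetric binary mask $\omega\in\{0,1\}^N$, an integer $s>0$. Sets: $\mathrm{M}=\{u: |\widehat u_{(i,j,l)}|=b_{(i,j,l)}\ \forall (i,j,l)\in\mathbb S\}$; $\mathrm{LF}=\{u: \widehat u_{(i,j,l)}=0 \text{ whenever } (\hat x_i,\hat y_j,\hat z_l)\notin B_{\bar r}\}$; $\mathrm{SUPP}=\{u:\omega_{(i,j,l)}u_{(i,j,l)}=u_{(i,j,l)}\ \forall(i,j,l)\}$; $\mathrm{SR}=\{u:\|u\|_0\le s,\ \mathrm{Im}(u)=0\}$ ($\|u\|_0$ = number of nonzero entries); $\mathrm{SYM}=\{u: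 u_{(i,j,l)}=u_{(N_x-i+1,j,l)}=-u_{(i,N_y-j+1,l)}=-u_{(i,j,N_z-l+1)}\ \forall(i,j,l)\}$. For closed nonempty $A$: $P_Ax=\operatorname{argmin}_{a\in A}\|a-x\|$ (possibly set-valued), $R_A=2P_A-\mathrm{Id}$, and $P_A^{-1}(S)=\{x: P_Ax\cap S\neq\emptyset\}$. Proximal normal cone: $N^P_A(a)=\mathrm{cone}(P_A^{-1}(a)-a)$ for $a\in A$. $\epsilon$-super-regularity at a distance: a set $\Omega$ is $\epsilon$-super-regular at a distance relative to $\Lambda$ at $\bar x$ with constant $\epsilon_U$ on the open set $U\ni\bar x$ if $\langle v-(y'-y),\,y-x\rangle\le\epsilon_U\|v-(y'-y)\|\,\|y-x\|$ for all $y'\in U\cap\Lambda$, all $y\in P_\Omega(y')$, and all $(x,v)$ with $v\in N^P_\Omega(x)$, $x+v\in U$, $x\in P_\Omega(x+v)$. A map $T$ is pointwise almost nonexpansive at $y$ on $U$ with violation $\epsilon\in[0,1)$ if $\|x^+-y^+\|\le\sqrt{1+\epsilon}\|x-y\|$ for all $x\in U$, $x^+\in Tx$, $y^+\in Ty$; pointwise almost $\alpha$-firmly nonexpansive ($\alpha\in(0,1)$) at $y$ on $U$ with violation $\epsilon\in[0,1)$ if $\|x^+-y^+\|^2\le(1+\epsilon)\|x-y\|^2-\frac{1-\alpha}{\alpha}\|(x^+-x)-(y^+-y)\|^2$ for all such $x,x^+,y^+$; ''$\alpha$-firmly nonexpansive'' means violation $0$. *)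

From mathcomp Require Import all_boot all_order all_algebra.
From mathcomp Require Import complex.
From mathcomp Require Import reals trigo.

Set Implicit Arguments.
Unset Strict Implicit.
Unset Printing Implicit Defensive.

Import Order.TTheory GRing.Theory Num.Theory.
Local Open Scope ring_scope.
Local Open Scope complex_scope.

Section Defs.
Variable R : realType.
Variables Nx Ny Nz : nat.

(* index set I = {1..Nx} x {1..Ny} x {1..Nz}, represented 0-based *)
Definition idx := ('I_Nx * 'I_Ny * 'I_Nz)%type.

Definition vec := {ffun idx -> R[i]}.

Definition inner (x y : vec) : R := complex.Re (\sum_(k : idx) (x k)^* * y k).
Definition norm (x : vec) : R := Num.sqrt (inner x x).

Definition rscale (a : R) (x : vec) : vec := (a%:C) *: x.

(* the (unnormalized) 3-D discrete Fourier transform; hat-I = I *)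
Definition expi (t : R) : R[i] := (cos t) +i* (sin t).
Definition dft (u : vec) : vec :=
  [ffun k : idx =>
     \sum_(j : idx) u j *
       expi (- (2 * pi) *
             ((nat_of_ord j.1.1 * nat_of_ord k.1.1)%:R / Nx%:R
            + (nat_of_ord j.1.2 * nat_of_ord k.1.2)%:R / Ny%:R
            + (nat_of_ord j.2 * nat_of_ord k.2)%:R / Nz%:R))].

Definition Mset (S : {set idx}) (b : idx -> R) (u : vec) : Prop :=
  forall k, k \in S -> `|dft u k| = (b k)%:C.

Definition in_ball (c1 c2 c3 r : R) (p1 p2 p3 : R) : Prop :=
  (p1 - c1) ^+ 2 + (p2 - c2) ^+ 2 + (p3 - c3) ^+ 2 <= r ^+ 2.

Definition LFset (xh : 'I_Nx -> R) (yh : 'I_Ny -> R) (zh : 'I_Nz -> R)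
  (c1 c2 c3 r : R) (u : vec) : Prop :=
  forall k : idx, ~ in_ball c1 c2 c3 r (xh k.1.1) (yh k.1.2) (zh k.2) ->
    dft u k = 0.

Definition SUPPset (omega : idx -> bool) (u : vec) : Prop :=
  forall k, ((omega k : nat)%:R * u k) = u k.

Definition SRset (s : nat) (u : vec) : Prop :=
  (#|[set k : idx | u k != 0%R]| <= s)%N /\ forall k, complex.Im (u k) = 0.

(* SYM : the symmetry set; index i |-> N_x - i + 1 is rev_ord (0-based) *)
Definition SYMset (u : vec) : Prop :=
  forall (i : 'I_Nx) (j : 'I_Ny) (l : 'I_Nz),
    u (i, j, l) = u (rev_ord i, j, l) /\
    u (i, j, l) = - u (i, rev_ord j, l) /\
    u (i, j, l) = - u (i, j, rev_ord l).

Definition mask_sym (omega : idx -> bool) : Prop :=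
  forall (i : 'I_Nx) (j : 'I_Ny) (l : 'I_Nz),
    omega (i, j, l) = omega (rev_ord i, j, l) /\
    omega (i, j, l) = omega (i, rev_ord j, l) /\
    omega (i, j, l) = omega (i, j, rev_ord l).

Definition proj (A : vec -> Prop) (x p : vec) : Prop :=
  A p /\ forall a, A a -> norm (p - x) <= norm (a - x).

Definition refl (A : vec -> Prop) (x z : vec) : Prop :=
  exists p, proj A x p /\ z = rscale 2 p - x.

Definition projinv (A S : vec -> Prop) (x : vec) : Prop :=
  exists p, proj A x p /\ S p.

Definition prox_normal (A : vec -> Prop) (a v : vec) : Prop :=
  exists (lam : R) (z : vec), 0 <= lam /\ proj A z a /\ v = rscale lam (z - a).

Definition is_open (U : vec -> Prop) : Prop :=
  forall x, U x -> exists e : R, 0 < e /\ forall y, norm (y - x) < e -> U y.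

Definition super_reg_dist (Om Lam : vec -> Prop) (xbar : vec) (epsU : R)
  (U : vec -> Prop) : Prop :=
  is_open U /\ U xbar /\
  forall y' y x v : vec,
    U y' -> Lam y' -> proj Om y' y ->
    prox_normal Om x v -> U (x + v) -> proj Om (x + v) x ->
    inner (v - (y' - y)) (y - x) <= epsU * norm (v - (y' - y)) * norm (y - x).

Definition pt_almost_nonexp (T : vec -> vec -> Prop) (y : vec)
  (U : vec -> Prop) (eps : R) : Prop :=
  0 <= eps < 1 /\
  forall x xp yp, U x -> T x xp -> T y yp ->
    norm (xp - yp) <= Num.sqrt (1 + eps) * norm (x - y).

Definition pt_almost_afne (T : vec -> vec -> Prop) (y : vec)
  (U : vec -> Prop) (alpha eps : R) : Prop :=
  0 < alpha < 1 /\ 0 <= eps < 1 /\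
  forall x xp yp, U x -> T x xp -> T y yp ->
    norm (xp - yp) ^+ 2 <=
      (1 + eps) * norm (x - y) ^+ 2
      - (1 - alpha) / alpha * norm ((xp - x) - (yp - y)) ^+ 2.

Definition pt_afne (T : vec -> vec -> Prop) (y : vec)
  (U : vec -> Prop) (alpha : R) : Prop :=
  pt_almost_afne T y U alpha 0.

Definition Lam_of (A U : vec -> Prop) (y : vec) : Prop :=
  projinv A (fun a => A a /\ U a) y /\ U y.

Definition full (y : vec) : Prop := True.

End Defs.
Arguments full {R Nx Ny Nz} y.

From mathcomp Require Import all_boot all_order all_algebra.
From mathcomp Require Import complex.
From mathcomp Require Import reals trigo.
From mathcomp Require Import ring lra.
Import Order.TTheory GRing.Theory Num.Theory.
Local Open Scope ring_scope.
Set Implicit Arguments.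
Unset Strict Implicit.
Unset Printing Implicit Defensive.

(* Let [p] and [q] be projections of [x] and [y] onto [A], and put
   [a = p - q] and [w = (x - p) - (y - q)]; then [x - y = a + w], while the
   reflections differ by [a - w].  Everything reduces to a lower bound on the
   angle between [a] and [w]: if [- <a, w> <= e |a| |w|] and [e <= eta (1 - e)],
   then [0 <= eta |a + w|^2 + 2 <a, w>], which is exactly the almost
   1/2-firm nonexpansiveness of [P_A] with violation [eta] and gives the almost
   nonexpansiveness of [R_A] with violation [2 eta].  For the real subspaces
   SYM, SUPP and LF the bound holds with [e = 0] because the residual [x - p] is
   orthogonal to [A]; for SR it holds with [e = 0] by the assumed firm
   nonexpansiveness; for M it is super-regularity at a distance applied to the
   proximal normal [x - p] at [p]. *)

Lemma linear_coef_eq0 (R : realFieldType) (c d : R) :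
  0 <= d -> (forall t, 0 <= 2 * t * c + t ^+ 2 * d) -> c = 0.
Proof.
move=> d_ge0 quad_ge0; have d1_gt0 : 0 < d + 1 by lra.
pose t := - c / (d + 1).
have c_eq : c = - (t * (d + 1)) by rewrite /t; field; rewrite lt0r_neq0.
have := quad_ge0 t; rewrite c_eq => quad_t.
have t2d_ge0 : 0 <= t ^+ 2 * d by rewrite mulr_ge0 ?sqr_ge0.
have t2_le0 : t ^+ 2 <= 0 by nra.
have /eqP : t ^+ 2 = 0 by apply/eqP; rewrite eq_le t2_le0 sqr_ge0.
by rewrite sqrf_eq0 => /eqP ->; rewrite mul0r oppr0.
Qed.

Section RealInnerProduct.
Variables (R : realType) (Nx Ny Nz : nat).
Local Notation vec := (vec R Nx Ny Nz).
Implicit Types (x y z a w : vec) (t : R).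

Lemma rscale2 x : rscale 2 x = x + x.
Proof. by rewrite /rscale rmorph_nat scaler_nat mulr2n. Qed.

Lemma rscaleN1 x : rscale (-1) x = - x.
Proof. by rewrite /rscale rmorphN1 scaleN1r. Qed.

Lemma innerE x y :
  inner x y =
  \sum_k (complex.Re (x k) * complex.Re (y k) + complex.Im (x k) * complex.Im (y k)).
Proof.
have ReD (u v : R[i]) : complex.Re (u + v) = complex.Re u + complex.Re v.
  by case: u; case: v.
rewrite /inner (big_morph _ ReD (erefl _)); apply: eq_bigr => k _.
by case: (x k) => ? ?; case: (y k) => ? ? /=; ring.
Qed.

Lemma innerC x y : inner x y = inner y x.
Proof. by rewrite !innerE; apply: eq_bigr => k _; ring. Qed.

Lemma innerDl x y z : inner (x + y) z = inner x z + inner y z.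
Proof.
rewrite !innerE -big_split; apply: eq_bigr => k _; rewrite ffunE.
by case: (x k) => ? ?; case: (y k) => ? ? /=; ring.
Qed.

Lemma innerNl x y : inner (- x) y = - inner x y.
Proof.
rewrite !innerE -sumrN; apply: eq_bigr => k _; rewrite ffunE.
by case: (x k) => ? ? /=; ring.
Qed.

Lemma innerZl t x y : inner (rscale t x) y = t * inner x y.
Proof.
rewrite !innerE mulr_sumr; apply: eq_bigr => k _; rewrite ffunE.
by case: (x k) => ? ? /=; ring.
Qed.

Lemma innerZr t x y : inner x (rscale t y) = t * inner x y.
Proof. by rewrite innerC innerZl innerC. Qed.

Lemma innerNr x y : inner x (- y) = - inner x y.
Proof. by rewrite innerC innerNl innerC. Qed.

Lemma innerBr x y z : inner x (y - z) = inner x y - inner x z.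
Proof. by rewrite innerC innerDl innerNl !(innerC x). Qed.

Lemma inner_ge0 x : 0 <= inner x x.
Proof. by rewrite innerE; apply: sumr_ge0 => k _; apply: addr_ge0; apply: sqr_ge0. Qed.

Lemma norm_ge0 x : 0 <= norm x.
Proof. exact: sqrtr_ge0. Qed.

Lemma norm_sqr x : norm x ^+ 2 = inner x x.
Proof. by rewrite sqr_sqrtr // inner_ge0. Qed.

Lemma normN x : norm (- x) = norm x.
Proof. by rewrite /norm innerNl innerNr opprK. Qed.

Lemma norm_sqrD a w : norm (a + w) ^+ 2 = norm a ^+ 2 + 2 * inner a w + norm w ^+ 2.
Proof. by rewrite !norm_sqr innerDl !(innerC _ (a + w)) !innerDl (innerC w a); ring. Qed.

Lemma norm_sqrB a w : norm (a - w) ^+ 2 = norm a ^+ 2 - 2 * inner a w + norm w ^+ 2.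
Proof. by rewrite norm_sqrD normN innerNr mulrN. Qed.

End RealInnerProduct.

Section ProjectionResidual.
Variables (R : realType) (Nx Ny Nz : nat).
Local Notation vec := (vec R Nx Ny Nz).
Implicit Types (x y p q a w : vec) (A U : vec -> Prop) (t e eta : R).

Definition real_subspace (A : vec -> Prop) :=
  forall p q t, A p -> A q -> A (p + rscale t q).

Lemma proj_subspace_orth A x p a :
  real_subspace A -> proj A x p -> A a -> inner (x - p) a = 0.
Proof.
move=> subA [Ap p_min] Aa.
suff orth : inner (p - x) a = 0 by rewrite -opprB innerNl orth oppr0.
apply: (linear_coef_eq0 (inner_ge0 a)) => t.
have := p_min _ (subA _ _ t Ap Aa); rewrite addrAC => le_norm.
have : norm (p - x) ^+ 2 <= norm (p - x + rscale t a) ^+ 2.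
  by rewrite ler_sqr ?nnegrE ?norm_ge0.
rewrite (norm_sqrD (p - x)) !norm_sqr !innerZl !innerZr; lra.
Qed.

Definition proj_residual_angle A y U e :=
  forall x p q, U x -> proj A x p -> proj A y q ->
  - inner (p - q) ((x - p) - (y - q)) <= e * norm (p - q) * norm ((x - p) - (y - q)).

Lemma subspace_residual_angle0 A y U : real_subspace A -> proj_residual_angle A y U 0.
Proof.
move=> subA x p q _ px qy.
have Apq : A (p - q) by rewrite -rscaleN1; apply: subA; [case: px | case: qy].
rewrite innerBr !(innerC (p - q)) !(proj_subspace_orth subA _ Apq) //.
by rewrite subrr oppr0 !mul0r.
Qed.

Lemma angle_slack_ge0 a w e eta :
  0 <= e -> 0 <= eta -> e <= eta * (1 - e) ->
  - inner a w <= e * norm a * norm w ->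
  0 <= eta * norm (a + w) ^+ 2 + 2 * inner a w.
Proof.
move=> e_ge0 eta_ge0 e_le; rewrite norm_sqrD.
have := norm_ge0 a; have := norm_ge0 w.
set A := norm a; set W := norm w; set c := inner a w => W_ge0 A_ge0 angle.
have amgm : 2 * A * W <= A ^+ 2 + W ^+ 2 by have := sqr_ge0 (A - W); nra.
have : 0 <= A * W * (eta * (1 - e) - e) by rewrite !mulr_ge0 // subr_ge0.
nra.
Qed.

Section ResidualDecomposition.
Variables x y p q : vec.

Lemma sub_residualE : x - y = (p - q) + ((x - p) - (y - q)).
Proof. by apply/ffunP => k; rewrite !ffunE; ring. Qed.

Lemma proj_sub_residualE : (p - x) - (q - y) = - ((x - p) - (y - q)).
Proof. by apply/ffunP => k; rewrite !ffunE; ring. Qed.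

Lemma refl_sub_residualE :
  (rscale 2 p - x) - (rscale 2 q - y) = (p - q) - ((x - p) - (y - q)).
Proof. by rewrite !rscale2; apply/ffunP => k; rewrite !ffunE; ring. Qed.

End ResidualDecomposition.

Lemma residual_angle_afne A y U e eta :
  0 <= e -> 0 <= eta < 1 -> e <= eta * (1 - e) ->
  proj_residual_angle A y U e -> pt_almost_afne (proj A) y U (1 / 2) eta.
Proof.
move=> e_ge0 /andP[eta_ge0 eta_lt1] e_le angle.
split; first by apply/andP; split; lra.
split=> [|x p q Ux px qy]; first by rewrite eta_ge0.
have := angle_slack_ge0 e_ge0 eta_ge0 e_le (angle x p q Ux px qy).
have -> : (1 - 1 / 2) / (1 / 2) = 1 :> R by field.
rewrite (sub_residualE x y p q) (proj_sub_residualE x y p q) normN norm_sqrD; lra.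
Qed.

Lemma residual_angle_refl A y U e eta :
  0 <= e -> 0 <= eta -> 2 * eta < 1 -> e <= eta * (1 - e) ->
  proj_residual_angle A y U e -> pt_almost_nonexp (refl A) y U (2 * eta).
Proof.
move=> e_ge0 eta_ge0 eta_lt e_le angle.
split; first by apply/andP; split; lra.
move=> x _ _ Ux [p [px ->]] [q [qy ->]].
have := angle_slack_ge0 e_ge0 eta_ge0 e_le (angle x p q Ux px qy).
rewrite refl_sub_residualE (sub_residualE x y p q).
set a := p - q; set w := x - p - (y - q) => slack.
rewrite -ler_sqr ?nnegrE ?mulr_ge0 ?sqrtr_ge0 ?norm_ge0 //.
rewrite exprMn (@sqr_sqrtr _ (1 + 2 * eta)); last lra.
move: slack; rewrite norm_sqrB norm_sqrD; lra.
Qed.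

Lemma residual_angle0_afne A y U :
  proj_residual_angle A y U 0 -> pt_afne (proj A) y U (1 / 2).
Proof. by apply: residual_angle_afne; rewrite ?lexx ?ltr01 ?mul0r. Qed.

Lemma residual_angle0_refl A y U :
  proj_residual_angle A y U 0 -> pt_almost_nonexp (refl A) y U 0.
Proof.
move=> angle; rewrite -[0 : R](mulr0 2).
by apply: (residual_angle_refl _ _ _ _ angle); rewrite ?mulr0 ?mul0r ?lexx ?ltr01.
Qed.

Lemma afne_residual_angle0 A y U :
  pt_afne (proj A) y U (1 / 2) -> proj_residual_angle A y U 0.
Proof.
move=> [_ [_ afne]] x p q Ux px qy; have := afne x p q Ux px qy.
have -> : (1 - 1 / 2) / (1 / 2) = 1 :> R by field.
rewrite (sub_residualE x y p q) (proj_sub_residualE x y p q) normN (norm_sqrD (p - q)).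
rewrite !mul0r; lra.
Qed.

Lemma super_reg_residual_angle A Lam xbar e U y :
  super_reg_dist A Lam xbar e U -> Lam y -> U y -> proj_residual_angle A y U e.
Proof.
move=> [_ [_ sreg]] Lam_y Uy x p q Ux px qy.
have normal : prox_normal A p (x - p).
  by exists 1, x; rewrite ler01 /rscale rmorph1 scale1r.
have := sreg y q p (x - p) Uy Lam_y qy normal; rewrite [p + _]addrC subrK.
by move=> /(_ Ux px); rewrite -(opprB p q) innerNr normN (innerC _ (p - q)) mulrAC.
Qed.

End ProjectionResidual.

Section PhaseRetrievalSubspaces.
Variables (R : realType) (Nx Ny Nz : nat).
Local Notation vec := (vec R Nx Ny Nz).
Implicit Types (p q : vec) (t : R).

Lemma SYMset_subspace : real_subspace (@SYMset R Nx Ny Nz).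
Proof.
move=> p q t Sp Sq i j l; rewrite /rscale !ffunE.
have [p1 [p2 p3]] := Sp i j l; have [q1 [q2 q3]] := Sq i j l.
split; first by rewrite p1 q1.
by split; [rewrite p2 q2 | rewrite p3 q3]; rewrite scalerN opprD.
Qed.

Lemma SUPPset_subspace omega : real_subspace (@SUPPset R Nx Ny Nz omega).
Proof.
by move=> p q t Sp Sq k; rewrite /rscale !ffunE -[_ *: q k]/(_ * q k) mulrDr mulrCA Sp Sq.
Qed.

Lemma dft_rscaleD p q t : dft (p + rscale t q) = dft p + rscale t (dft q : vec).
Proof.
apply/ffunP => k; rewrite !ffunE scaler_sumr -big_split; apply: eq_bigr => j _.
by rewrite !ffunE mulrDl scalerAl.
Qed.

Lemma LFset_subspace xh yh zh c1 c2 c3 r :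
  real_subspace (@LFset R Nx Ny Nz xh yh zh c1 c2 c3 r).
Proof.
by move=> p q t Lp Lq k k_out; rewrite dft_rscaleD ffunE Lp // ffunE Lq // scaler0 addr0.
Qed.

End PhaseRetrievalSubspaces.

(* The paper's constant; the argument above only needs [e <= eta * (1 - e)]. *)
Definition regularity_violation (R : realFieldType) (e : R) :=
  4 * e * (1 + e) / (1 - e) ^+ 2.

Section RegularityViolation.
Variables (R : rcfType) (e : R).
Local Notation eta := (regularity_violation e).

Lemma regularity_violation_slack :
  0 <= e -> e < 1 -> 0 <= eta /\ e <= eta * (1 - e).
Proof.
move=> e_ge0 e_lt1; have e1_gt0 : 0 < 1 - e by lra.
have e12_gt0 : 0 < (1 - e) ^+ 2 by rewrite exprn_gt0.
split; first by apply: divr_ge0; [nra | exact: ltW].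
have -> : eta * (1 - e) = 4 * e * (1 + e) / (1 - e).
  by rewrite /regularity_violation; field; rewrite lt0r_neq0.
by rewrite ler_pdivlMr //; nra.
Qed.

Lemma regularity_violation_lt1 :
  0 <= e < 2 * Num.sqrt 3 / 3 - 1 -> e < 1 /\ eta < 1.
Proof.
move=> /andP[e_ge0 e_lt]; have sqrt3 : Num.sqrt 3 ^+ 2 = 3 :> R by rewrite sqr_sqrtr.
have := sqrtr_ge0 (3 : R) => sqrt3_ge0.
have quad : 3 * e ^+ 2 + 6 * e - 1 < 0 by nra.
have e_lt1 : e < 1 by nra.
split=> //; rewrite ltr_pdivrMr ?exprn_gt0 ?subr_gt0 //; nra.
Qed.

Lemma regularity_violation_refl_lt1 :
  0 <= e < 4 * Num.sqrt 2 / 7 - 5 / 7 -> e < 1 /\ 2 * eta < 1.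
Proof.
move=> /andP[e_ge0 e_lt]; have sqrt2 : Num.sqrt 2 ^+ 2 = 2 :> R by rewrite sqr_sqrtr.
have := sqrtr_ge0 (2 : R) => sqrt2_ge0.
have quad : 7 * e ^+ 2 + 10 * e - 1 < 0 by nra.
have e_lt1 : e < 1 by nra.
split=> //; rewrite mulrA ltr_pdivrMr ?exprn_gt0 ?subr_gt0 //; nra.
Qed.

End RegularityViolation.

Theorem lemma4 (R : realType) (Nx Ny Nz : nat)
  (S : {set idx Nx Ny Nz}) (b : idx Nx Ny Nz -> R)
  (xh : 'I_Nx -> R) (yh : 'I_Ny -> R) (zh : 'I_Nz -> R)
  (c1 c2 c3 rbar : R) (omega : idx Nx Ny Nz -> bool) (s : nat)
  (U2 U5 : vec R Nx Ny Nz -> Prop) (x2 x5 : vec R Nx Ny Nz) (eps5 : R) :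
  let A1 := @SYMset R Nx Ny Nz in
  let A2 := @SRset R Nx Ny Nz s in
  let A3 := @SUPPset R Nx Ny Nz omega in
  let A4 := @LFset R Nx Ny Nz xh yh zh c1 c2 c3 rbar in
  let A5 := @Mset R Nx Ny Nz S b in
  let Lam2 := Lam_of A2 U2 in
  let Lam5 := Lam_of A5 U5 in
  (forall k, k \in S -> 0 <= b k) ->
  0 < rbar ->
  mask_sym omega ->
  (0 < s)%N ->
  (* (a) *)
  A2 x2 -> is_open U2 -> U2 x2 ->
  (forall y, Lam2 y -> pt_afne (proj A2) y U2 (1 / 2)) ->
  A5 x5 -> is_open U5 -> U5 x5 ->
  super_reg_dist A5 Lam5 x5 eps5 U5 ->
  (* (i) *)
  ((0 <= eps5 < 4 * Num.sqrt 2 / 7 - 5 / 7) ->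
     (forall y, full y -> pt_almost_nonexp (refl A1) y full 0) /\
     (forall y, Lam2 y -> pt_almost_nonexp (refl A2) y U2 0) /\
     (forall y, full y -> pt_almost_nonexp (refl A3) y full 0) /\
     (forall y, full y -> pt_almost_nonexp (refl A4) y full 0) /\
     (forall y, Lam5 y -> pt_almost_nonexp (refl A5) y U5
        (8 * eps5 * (1 + eps5) / (1 - eps5) ^+ 2))) /\
  (* (ii) *)
  ((0 <= eps5 < 2 * Num.sqrt 3 / 3 - 1) ->
     (forall y, full y -> pt_almost_afne (proj A1) y full (1 / 2) 0) /\
     (forall y, Lam2 y -> pt_almost_afne (proj A2) y U2 (1 / 2) 0) /\
     (forall y, full y -> pt_almost_afne (proj A3) y full (1 / 2) 0) /\
     (forall y, full y -> pt_almost_afne (proj A4) y full (1 / 2) 0) /\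
     (forall y, Lam5 y -> pt_almost_afne (proj A5) y U5 (1 / 2)
        (4 * eps5 * (1 + eps5) / (1 - eps5) ^+ 2))).
Proof.
move=> A1 A2 A3 A4 A5 Lam2 Lam5 _ _ _ _ _ _ _ afne2 _ _ _ sreg5.
have sub1 : real_subspace A1 := @SYMset_subspace R Nx Ny Nz.
have sub3 : real_subspace A3 := @SUPPset_subspace R Nx Ny Nz omega.
have sub4 : real_subspace A4 := @LFset_subspace R Nx Ny Nz xh yh zh c1 c2 c3 rbar.
have angle2 y : Lam2 y -> proj_residual_angle A2 y U2 0.
  by move=> /afne2; apply: afne_residual_angle0.
have angle5 y : Lam5 y -> proj_residual_angle A5 y U5 eps5.
  by move=> Lam5y; apply: (super_reg_residual_angle sreg5) => //; case: Lam5y.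
split=> eps_bound; have eps_ge0 : 0 <= eps5 by case/andP: eps_bound.
- have [eps_lt1 viol_lt] := regularity_violation_refl_lt1 eps_bound.
  have [viol_ge0 eps_le] := regularity_violation_slack eps_ge0 eps_lt1.
  have -> : 8 * eps5 * (1 + eps5) / (1 - eps5) ^+ 2 = 2 * regularity_violation eps5.
    by rewrite /regularity_violation; ring.
  split; [|split; [|split; [|split]]] => y Ly.
  + by apply/residual_angle0_refl/subspace_residual_angle0.
  + exact/residual_angle0_refl/angle2.
  + by apply/residual_angle0_refl/subspace_residual_angle0.
  + by apply/residual_angle0_refl/subspace_residual_angle0.
  + exact: residual_angle_refl eps_ge0 viol_ge0 viol_lt eps_le (angle5 y Ly).
- have [eps_lt1 viol_lt1] := regularity_violation_lt1 eps_bound.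
  have [viol_ge0 eps_le] := regularity_violation_slack eps_ge0 eps_lt1.
  split; [|split; [|split; [|split]]] => y Ly.
  + by apply/residual_angle0_afne/subspace_residual_angle0.
  + exact: afne2.
  + by apply/residual_angle0_afne/subspace_residual_angle0.
  + by apply/residual_angle0_afne/subspace_residual_angle0.
  + apply: residual_angle_afne eps_ge0 _ eps_le (angle5 y Ly).
    by rewrite viol_ge0 viol_lt1.
Qed.
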